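(* Let $\Gamma$ be a graph satisfying Assumption (A), and fix an index $j$ of an entry of the trace vector that is not one of the forced-zero entries (i.e. not $B_i$ with $o(e_i)$ of degree one, nor $D_i$ with $\tau(e_i)$ of degree one). Then there exist $\boldsymbol{\ell}\in\mathbb{R}_+^N$ and an eigenpair $(k^2,f)$ of $(\Gamma,\boldsymbol{\ell})$ such that $k^2$ is a non-zero simple eigenvalue, $f$ is not supported on a single loop (if $\Gamma$ has loops), and $(\mathrm{tr}_k(f))_j\neq0$.
   Context: $\Gamma$: finite graph with edges $e_1,\dots,e_N$ oriented from $o(e_j)$ to $\tau(e_j)$; a loop has $o(e_j)=\tau(e_j)$. Assumption (A): connected, no vertex of degree two, some vertex of degree different from two. $(\Gamma,\boldsymbol{\ell})$: $e_j\cong[0,\ell_j]$ ($t=0$ at $o(e_j)$), Laplacian $-d^2/dt^2$ with standard vertex conditions (continuity at vertices and $\sum_{o(e_i)=v}f'|_{e_i}(0)-\sum_{\tau(e_i)=v}f'|_{e_i}(\ell_i)=0$). For an eigenpair with $k>0$: $f|_{e_i}(t)=A_i\cos(kt)+B_i\sin(kt)=C_i\cos(k(\ell_i-t))+D_i\sin(k(\ell_i-t))$; $\mathrm{tr}_k(f)\in\mathbb{C}^{4N}$ collects all $A_i,B_i,C_i,D_i$ ($B_i=f'|_{e_i}(0)/k$, $D_i=-f'|_{e_i}(\ell_i)/k$, which vanish at degree-one vertices). $f$ is supported on a single loop if for some loop $e_i$, $f$ vanishes identically on all other edges. *)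

From Stdlib Require Import Reals.
From Coquelicot Require Import Coquelicot.
From mathcomp Require Import ssreflect ssrfun ssrbool eqtype ssrnat seq
  choice fintype finset bigop fingraph.

Set Implicit Arguments.
Unset Strict Implicit.
Unset Printing Implicit Defensive.

(** A finite graph: vertex set [V] (a finite type), edges [e_0..e_{N-1}]
    indexed by ['I_N], edge [i] oriented from [o i] to [tau i]. *)

(** degree of a vertex: number of edge-ends at [v] (a loop counts twice). *)
Definition degree (V : finType) (N : nat) (o tau : 'I_N -> V) (v : V) : nat :=
  (#|[set i : 'I_N | o i == v]| + #|[set i : 'I_N | tau i == v]|)%N.

Definition adjacent (V : finType) (N : nat) (o tau : 'I_N -> V) : rel V :=
  fun u w => [exists i : 'I_N, ((o i == u) && (tau i == w))
                             || ((o i == w) && (tau i == u))].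

Definition graph_connected (V : finType) (N : nat) (o tau : 'I_N -> V) : Prop :=
  forall u w : V, connect (adjacent o tau) u w.

Definition assumptionA (V : finType) (N : nat) (o tau : 'I_N -> V) : Prop :=
  [/\ graph_connected o tau,
      (forall v : V, degree o tau v <> 2%N)
    & (exists v : V, degree o tau v <> 2%N)].

Open Scope R_scope.

Definition is_deriveC (g : R -> C) (t : R) (l : C) : Prop :=
  @is_derive R_AbsRing C_R_NormedModule g t l.

(** [f i t] is the value of the function on edge [e_i] at the point
    [t in [0, l i]] ([t = 0] at [o e_i]); [df i] is its derivative.
    [solution] says: [f] solves [-f'' = lam f] on every edge (twice
    differentiable on the closed edge) and satisfies the standard vertex
    conditions (continuity and Kirchhoff).  Zero is allowed (the eigenspace). *)
Definition solution (V : finType) (N : nat) (o tau : 'I_N -> V) (l : 'I_N -> R)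
  (lam : R) (f df : 'I_N -> R -> C) : Prop :=
  [/\ (forall i t, 0 <= t <= l i -> is_deriveC (f i) t (df i t)),
      (forall i t, 0 <= t <= l i ->
          is_deriveC (df i) t (Cmult (RtoC (- lam)) (f i t))),
      [/\ (forall i j, o i = o j -> f i 0 = f j 0),
          (forall i j, o i = tau j -> f i 0 = f j (l j))
        & (forall i j, tau i = tau j -> f i (l i) = f j (l j))]
    &
      (forall v : V,
          Cminus (\big[Cplus/RtoC 0]_(i | o i == v) df i 0)
                 (\big[Cplus/RtoC 0]_(i | tau i == v) df i (l i)) = RtoC 0)].

Definition nonzero_fun (N : nat) (l : 'I_N -> R) (f : 'I_N -> R -> C) : Prop :=
  exists i t, 0 <= t <= l i /\ f i t <> RtoC 0.

Definition eigenpair (V : finType) (N : nat) (o tau : 'I_N -> V) (l : 'I_N -> R)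
  (lam : R) (f df : 'I_N -> R -> C) : Prop :=
  solution o tau l lam f df /\ nonzero_fun l f.

Definition simple_eigenvalue (V : finType) (N : nat) (o tau : 'I_N -> V)
  (l : 'I_N -> R) (lam : R) : Prop :=
  exists f0 df0, eigenpair o tau l lam f0 df0 /\
    forall g dg, solution o tau l lam g dg ->
      exists c : C, forall i t, 0 <= t <= l i -> g i t = Cmult c (f0 i t).

Definition supported_on_single_loop (V : finType) (N : nat) (o tau : 'I_N -> V)
  (l : 'I_N -> R) (f : 'I_N -> R -> C) : Prop :=
  exists i, o i = tau i /\
    forall j, j <> i -> forall t, 0 <= t <= l j -> f j t = RtoC 0.

Inductive trcomp := trA | trB | trC | trD.

Definition trace_k (N : nat) (l : 'I_N -> R) (k : R) (f df : 'I_N -> R -> C)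
  (j : 'I_N * trcomp) : C :=
  let (i, c) := j in
  match c with
  | trA => f i 0
  | trB => Cdiv (df i 0) (RtoC k)
  | trC => f i (l i)
  | trD => Copp (Cdiv (df i (l i)) (RtoC k))
  end.

Definition forced_zero (V : finType) (N : nat) (o tau : 'I_N -> V)
  (j : 'I_N * trcomp) : Prop :=
  let (i, c) := j in
  match c with
  | trB => degree o tau (o i) = 1%N
  | trD => degree o tau (tau i) = 1%N
  | _ => False
  end.

From Stdlib Require Import Reals Lra Lia.
From Coquelicot Require Import Coquelicot.
From HB Require Import structures.
From mathcomp Require Import ssreflect ssrfun ssrbool eqtype ssrnat seq path.
From mathcomp Require Import fintype finset bigop fingraph zify.

Set Implicit Arguments.
Unset Strict Implicit.
Unset Printing Implicit Defensive.
Open Scope R_scope.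

(* Take k = 1 and a spanning tree rooted at a vertex of degree other than 1 (if
   there is one) that avoids the edge of the entry j unless that edge is a bridge.
   On each edge the eigenfunction is a profile cos t + s sin t starting from the
   value 1: tree edges towards inner vertices have length 2 pi, pendant edges end
   where the slope vanishes, and non-tree edges end where the profile is 1 again,
   with outgoing slope s at both ends.  Every non-leaf vertex then carries the value
   1, and the Kirchhoff condition becomes charge conservation: non-tree and pendant
   edges carry charge 1, except one edge b carrying 1 minus their number, and the
   slope of a tree edge is the total charge of the subtree below it.
   Any other solution is proportional to this one: it takes equal values at both
   ends of 2 pi edges, is then determined on non-tree edges by its end values, and
   on the remaining tree edges by the Kirchhoff condition, from the leaves upwards.
   The entry j is a nonzero vertex value or a slope; a slope is nonzero once b is
   chosen away from the edge of j, or outside the subtree below it when it is a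
   bridge, which the absence of degree-2 vertices makes possible. *)

HB.instance Definition _ := Monoid.isComLaw.Build R 0 Rplus
  (fun a b c => esym (Rplus_assoc a b c)) Rplus_comm Rplus_0_l.
HB.instance Definition _ := Monoid.isComLaw.Build C (RtoC 0) Cplus
  Cplus_assoc Cplus_comm Cplus_0_l.

Lemma RtoC_neq0 (a : R) : a <> 0 -> RtoC a <> RtoC 0.
Proof. by move=> Ha /RtoC_inj. Qed.

Lemma Cdiv_RtoC1 (z : C) : Cdiv z (RtoC 1) = z.
Proof. by field. Qed.

Lemma Cminus_eq0 (x y : C) : Cminus x y = RtoC 0 -> x = y.
Proof. by move=> E; transitivity (Cplus (Cminus x y) y); [ring | rewrite E; ring]. Qed.

Lemma Cmult_RtoC_eq0 (z : C) (c : R) : c <> 0 -> Cmult z (RtoC c) = RtoC 0 -> z = RtoC 0.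
Proof.
move=> /RtoC_neq0 Hc E.
by transitivity (Cdiv (Cmult z (RtoC c)) (RtoC c)); [field | rewrite E; field].
Qed.

Lemma big_Rminus (I : finType) (P : pred I) (F G : I -> R) :
  \big[Rplus/0]_(i | P i) (F i - G i) =
  \big[Rplus/0]_(i | P i) F i - \big[Rplus/0]_(i | P i) G i.
Proof.
rewrite /Rminus big_split /=; congr (_ + _).
by symmetry; apply: (big_endo Ropp) => [x y|]; ring.
Qed.

Lemma big_Cminus (I : finType) (P : pred I) (F G : I -> C) :
  \big[Cplus/RtoC 0]_(i | P i) Cminus (F i) (G i) =
  Cminus (\big[Cplus/RtoC 0]_(i | P i) F i) (\big[Cplus/RtoC 0]_(i | P i) G i).
Proof.
rewrite /Cminus big_split /=; congr (Cplus _ _).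
by symmetry; apply: (big_endo Copp) => [x y|]; ring.
Qed.

Lemma big_Cscal (I : finType) (P : pred I) (F : I -> C) a :
  \big[Cplus/RtoC 0]_(i | P i) Cmult a (F i) = Cmult a (\big[Cplus/RtoC 0]_(i | P i) F i).
Proof. by symmetry; apply: (big_endo (Cmult a)) => [x y|]; ring. Qed.

Lemma big_RtoC (I : finType) (P : pred I) (F : I -> R) :
  RtoC (\big[Rplus/0]_(i | P i) F i) = \big[Cplus/RtoC 0]_(i | P i) RtoC (F i).
Proof. exact: (big_morph RtoC RtoC_plus erefl). Qed.

Lemma big_R_ge0 (I : finType) (P : pred I) (F : I -> R) :
  (forall i, P i -> 0 <= F i) -> 0 <= \big[Rplus/0]_(i | P i) F i.
Proof. by move=> H; apply: (big_ind (fun x => 0 <= x)) => // [|x y]; lra. Qed.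

Lemma big_R_card (I : finType) (P : pred I) : \big[Rplus/0]_(i | P i) 1 = INR #|P|.
Proof.
rewrite big_const; elim: #|P| => [|n IH] //=.
by rewrite IH; case: n {IH} => [|n] /=; ring.
Qed.

Lemma big_R_pick (I : finType) (y : I) (a : R) :
  \big[Rplus/0]_(x : I) (if y == x then a else 0) = a.
Proof.
rewrite (bigD1 y) //= eqxx big1 => [|x]; first ring.
by rewrite eq_sym => /negbTE ->.
Qed.

Lemma is_deriveC_fst (g : R -> C) t l :
  is_deriveC g t l -> is_derive (fun t => fst (g t)) t (fst l).
Proof.
move=> H; apply: filterdiff_ext_lin => [|y //].
exact: (filterdiff_comp _ (fun x : C_R_NormedModule => fst x) _ _ H
          (filterdiff_linear _ is_linear_fst)).
Qed.

Lemma is_deriveC_snd (g : R -> C) t l :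
  is_deriveC g t l -> is_derive (fun t => snd (g t)) t (snd l).
Proof.
move=> H; apply: filterdiff_ext_lin => [|y //].
exact: (filterdiff_comp _ (fun x : C_R_NormedModule => snd x) _ _ H
          (filterdiff_linear _ is_linear_snd)).
Qed.

Lemma is_deriveC_RtoC (u : R -> R) t du :
  is_derive u t du -> is_deriveC (fun t => RtoC (u t)) t (RtoC du).
Proof.
move=> Hu; rewrite /is_deriveC /is_derive.
have H0 : is_derive (fun _ : R => 0) t 0 by apply: is_derive_const.
apply: filterdiff_ext_lin => [|y //].
apply: (@filterdiff_comp'_2 R_AbsRing R_NormedModule R_NormedModule R_NormedModule
  C_R_NormedModule u (fun _ => 0) (fun a b => (a, b) : C) t _ _ (fun a b => (a, b) : C) Hu H0).
apply: (filterdiff_linear (fun z : prod_NormedModule R_AbsRing R_NormedModule R_NormedModule =>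
  (fst z, snd z) : C)).
split=> [[a b] [c d] // | k [a b] // |].
exists 1; split=> [|[a b]]; first lra.
by rewrite Rmult_1_l; apply: Rle_refl.
Qed.

Lemma zero_derivative_const (P : R -> R) L :
  (forall t, 0 <= t <= L -> derivable_pt_lim P t 0) ->
  forall t, 0 <= t <= L -> P t = P 0.
Proof.
move=> H t Ht.
have [||c [_ E]] := MVT_gen P 0 t (fun _ => 0); last by lra.
- move=> x; rewrite Rmin_left ?Rmax_right; try lra.
  by move=> Hx; apply/is_derive_Reals/H; lra.
- move=> x; rewrite Rmin_left ?Rmax_right; try lra.
  by move=> Hx; apply: derivable_continuous_pt; exists 0; apply: H; lra.
Qed.

(* [u cos - u' sin] and [u sin + u' cos] are first integrals. *)
Lemma oscillator_R (u u' : R -> R) (L : R) :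
  (forall t, 0 <= t <= L ->
     derivable_pt_lim u t (u' t) /\ derivable_pt_lim u' t (- u t)) ->
  forall t, 0 <= t <= L ->
    u t = u 0 * cos t + u' 0 * sin t /\ u' t = - u 0 * sin t + u' 0 * cos t.
Proof.
move=> Hu t Ht.
have HP : u t * cos t - u' t * sin t = u 0.
{ rewrite -[u 0](_ : u 0 * cos 0 - u' 0 * sin 0 = u 0); last by rewrite cos_0 sin_0; ring.
  apply: (zero_derivative_const (P := fun t => u t * cos t - u' t * sin t)) Ht => x Hx.
  have -> : 0 = (u' x * cos x + u x * (- sin x)) - (- u x * sin x + u' x * cos x) by ring.
  by apply: derivable_pt_lim_minus; apply: derivable_pt_lim_mult;
    case: (Hu x Hx); auto using derivable_pt_lim_cos, derivable_pt_lim_sin. }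
have HQ : u t * sin t + u' t * cos t = u' 0.
{ rewrite -[u' 0](_ : u 0 * sin 0 + u' 0 * cos 0 = u' 0); last by rewrite cos_0 sin_0; ring.
  apply: (zero_derivative_const (P := fun t => u t * sin t + u' t * cos t)) Ht => x Hx.
  have -> : 0 = (u' x * sin x + u x * cos x) + (- u x * cos x + u' x * (- sin x)) by ring.
  by apply: derivable_pt_lim_plus; apply: derivable_pt_lim_mult;
    case: (Hu x Hx); auto using derivable_pt_lim_cos, derivable_pt_lim_sin. }
have := sin2_cos2 t; rewrite /Rsqr => H1.
rewrite -HP -HQ; split; [transitivity (u t * (sin t * sin t + cos t * cos t))
                        |transitivity (u' t * (sin t * sin t + cos t * cos t))].
all: by [rewrite H1; ring | ring].
Qed.

Lemma oscillator_C (g dg : R -> C) (L : R) :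
  (forall t, 0 <= t <= L -> is_deriveC g t (dg t)) ->
  (forall t, 0 <= t <= L -> is_deriveC dg t (Cmult (RtoC (- 1)) (g t))) ->
  forall t, 0 <= t <= L ->
    g t = Cplus (Cmult (g 0) (RtoC (cos t))) (Cmult (dg 0) (RtoC (sin t))) /\
    dg t = Cplus (Cmult (g 0) (RtoC (- sin t))) (Cmult (dg 0) (RtoC (cos t))).
Proof.
move=> Hg Hdg t Ht.
have D x : 0 <= x <= L ->
  (derivable_pt_lim (fun t => fst (g t)) x (fst (dg x)) /\
   derivable_pt_lim (fun t => fst (dg t)) x (- fst (g x))) /\
  (derivable_pt_lim (fun t => snd (g t)) x (snd (dg x)) /\
   derivable_pt_lim (fun t => snd (dg t)) x (- snd (g x))).
{ move=> Hx; have /is_deriveC_fst H1 := Hdg x Hx; have /is_deriveC_snd H2 := Hdg x Hx.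
  split; split; apply/is_derive_Reals;
    [exact: is_deriveC_fst (Hg x Hx) | | exact: is_deriveC_snd (Hg x Hx) |].
  - by rewrite (_ : - fst (g x) = fst (Cmult (RtoC (-1)) (g x))) //=; ring.
  - by rewrite (_ : - snd (g x) = snd (Cmult (RtoC (-1)) (g x))) //=; ring. }
have [h1 h2] := oscillator_R (fun x Hx => proj1 (D x Hx)) Ht.
have [h3 h4] := oscillator_R (fun x Hx => proj2 (D x Hx)) Ht.
by split; apply: injective_projections; rewrite /= ?h1 ?h2 ?h3 ?h4; ring.
Qed.

Definition profile (s t : R) := cos t + s * sin t.
Definition dprofile (s t : R) := - sin t + s * cos t.

(* The profile returns to the value 1 with outgoing slope [s] after [cycle_len s],
   and reaches slope 0 with a nonzero value after [pendant_len s]. *)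
Definition cycle_len (s : R) := 2 * atan s + 2 * PI.
Definition pendant_len (s : R) := atan s + PI.

Lemma profile_der s t : is_derive (profile s) t (dprofile s t).
Proof. by rewrite /profile /dprofile; auto_derive => //; ring. Qed.
Lemma dprofile_der s t : is_derive (dprofile s) t (- profile s t).
Proof. by rewrite /profile /dprofile; auto_derive => //; ring. Qed.
Lemma profile_rev_der s L t :
  is_derive (fun t => profile s (L - t)) t (- dprofile s (L - t)).
Proof. by rewrite /profile /dprofile; auto_derive => //; rewrite /Rminus; ring. Qed.
Lemma dprofile_rev_der s L t :
  is_derive (fun t => - dprofile s (L - t)) t (- profile s (L - t)).
Proof. by rewrite /profile /dprofile; auto_derive => //; rewrite /Rminus; ring. Qed.

Lemma profile0 s : profile s 0 = 1.
Proof. by rewrite /profile cos_0 sin_0; ring. Qed.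
Lemma dprofile0 s : dprofile s 0 = s.
Proof. by rewrite /dprofile cos_0 sin_0; ring. Qed.
Lemma profile_2PI s : profile s (2 * PI) = 1.
Proof. by rewrite /profile cos_2PI sin_2PI; ring. Qed.
Lemma dprofile_2PI s : dprofile s (2 * PI) = s.
Proof. by rewrite /dprofile cos_2PI sin_2PI; ring. Qed.

Lemma cos_atan_facts s :
  [/\ 0 < cos (atan s), sin (atan s) = s * cos (atan s)
    & sin (atan s) * sin (atan s) + cos (atan s) * cos (atan s) = 1].
Proof.
have [h1 h2] := atan_bound s.
have Hc : 0 < cos (atan s) by apply: cos_gt_0; lra.
split=> //; last by have := sin2_cos2 (atan s); rewrite /Rsqr.
by rewrite -{2}(tan_atan s) /tan; field; lra.
Qed.

Lemma cycle_len_gt0 s : 0 < cycle_len s.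
Proof. by rewrite /cycle_len; have [] := atan_bound s; have := PI_RGT_0; lra. Qed.
Lemma pendant_len_gt0 s : 0 < pendant_len s.
Proof. by rewrite /pendant_len; have [] := atan_bound s; have := PI_RGT_0; lra. Qed.

Lemma cos_cycle_len s : cos (cycle_len s) = cos (2 * atan s).
Proof. by rewrite /cycle_len cos_plus cos_2PI sin_2PI; ring. Qed.
Lemma sin_cycle_len s : sin (cycle_len s) = sin (2 * atan s).
Proof. by rewrite /cycle_len sin_plus cos_2PI sin_2PI; ring. Qed.

Lemma profile_cycle_len s : profile s (cycle_len s) = 1.
Proof.
have [_ Hs H1] := cos_atan_facts s.
by rewrite /profile cos_cycle_len sin_cycle_len cos_2a sin_2a -H1 Hs; ring.
Qed.

Lemma dprofile_cycle_len s : dprofile s (cycle_len s) = - s.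
Proof.
have [_ Hs H1] := cos_atan_facts s.
rewrite /dprofile cos_cycle_len sin_cycle_len cos_2a sin_2a.
transitivity (- s * (sin (atan s) * sin (atan s) + cos (atan s) * cos (atan s)));
  last by rewrite H1; ring.
by rewrite Hs; ring.
Qed.

Lemma sin_cycle_len_neq0 s : s <> 0 -> sin (cycle_len s) <> 0.
Proof.
move=> Hs0; have [Hc Hs _] := cos_atan_facts s.
rewrite sin_cycle_len sin_2a Hs => E.
have /Rmult_integral[//|/Rmult_integral] : s * (cos (atan s) * cos (atan s)) = 0 by lra.
lra.
Qed.

Lemma dprofile_pendant_len s : dprofile s (pendant_len s) = 0.
Proof.
have [_ Hs _] := cos_atan_facts s.
by rewrite /dprofile /pendant_len neg_cos neg_sin Hs; ring.
Qed.

Lemma cos_pendant_len_neq0 s : cos (pendant_len s) <> 0.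
Proof. by have [Hc _ _] := cos_atan_facts s; rewrite /pendant_len neg_cos; lra. Qed.

Lemma profile_pendant_len_neq0 s : profile s (pendant_len s) <> 0.
Proof.
have [Hc Hs _] := cos_atan_facts s.
rewrite /profile /pendant_len neg_cos neg_sin Hs.
have : 0 < cos (atan s) * (1 + s * s) by apply: Rmult_lt_0_compat => //; nra.
lra.
Qed.

Section Degree.
Variables (V : finType) (N : nat) (o tau : 'I_N -> V).
Local Notation deg := (degree o tau).

Definition incident i x := (o i == x) || (tau i == x).
Definition end_count i x := ((o i == x) + (tau i == x))%N.
Definition joins i u w := ((o i == u) && (tau i == w)) || ((o i == w) && (tau i == u)).
Definition adjacent_in (E : pred 'I_N) : rel V := fun u w => [exists i, E i && joins i u w].

Lemma incident_o i : incident i (o i). Proof. by rewrite /incident eqxx. Qed.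
Lemma incident_tau i : incident i (tau i). Proof. by rewrite /incident eqxx orbT. Qed.

Lemma incident_joins i u w x : joins i u w -> incident i x = (x == u) || (x == w).
Proof.
rewrite /incident; case/orP => /andP[/eqP -> /eqP ->].
by rewrite ![_ == x]eq_sym. by rewrite ![_ == x]eq_sym orbC.
Qed.

Lemma end_count_joins i u w x : joins i u w -> end_count i x = ((x == u) + (x == w))%N.
Proof.
rewrite /end_count; case/orP => /andP[/eqP -> /eqP ->].
by rewrite ![_ == x]eq_sym. by rewrite ![_ == x]eq_sym addnC.
Qed.

Lemma end_count_loop i : o i = tau i -> end_count i (o i) = 2%N.
Proof. by rewrite /end_count => <-; rewrite eqxx. Qed.

Lemma adjacent_in_sym E : symmetric (adjacent_in E).
Proof. by move=> u w; apply/existsP/existsP => -[i Hi]; exists i; rewrite /joins orbC. Qed.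

Lemma degree_sum x : deg x = (\sum_(i < N) end_count i x)%N.
Proof.
rewrite /degree /end_count big_split /= -!sum1_card.
rewrite [in LHS]big_mkcond [X in (_ + X)%N]big_mkcond /=.
by congr (_ + _)%N; apply: eq_bigr => i _; rewrite inE; case: (_ == _).
Qed.

Lemma end_count_gt0 i x : (0 < end_count i x)%N = incident i x.
Proof. by rewrite /end_count /incident; case: (o i == x); case: (tau i == x). Qed.

Lemma degree_gt0 i x : incident i x -> (0 < deg x)%N.
Proof.
rewrite -end_count_gt0 degree_sum (bigD1 i) //= => H.
by rewrite (leq_trans H) // leq_addr.
Qed.

Lemma degree_gt1 i i' x : i != i' -> incident i x -> incident i' x -> (1 < deg x)%N.
Proof.
move=> Hii; rewrite -!end_count_gt0 => H H'.
rewrite degree_sum (bigD1 i) //= (bigD1 i') 1?eq_sym //= addnA.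
by apply: leq_trans (leq_addr _ _); rewrite -[2%N]/(1 + 1)%N leq_add.
Qed.

Lemma degree_loop_gt1 i : o i = tau i -> (1 < deg (o i))%N.
Proof.
move=> E; rewrite degree_sum (bigD1 i) //=.
by apply: leq_trans (leq_addr _ _); rewrite /end_count E eqxx.
Qed.

Lemma degree_le_incident2 x (b1 b2 : bool) i1 i2 :
  (forall i, incident i x -> (b1 && (i == i1)) || (b2 && (i == i2))) ->
  (deg x <= b1 * end_count i1 x + b2 * end_count i2 x)%N.
Proof.
move=> H; rewrite degree_sum.
apply: (@leq_trans (\sum_(i < N)
  (b1 * ((i == i1) * end_count i x) + b2 * ((i == i2) * end_count i x)))%N).
  apply: leq_sum => i _; case Ht: (incident i x); last first.
    by move: Ht; rewrite -end_count_gt0; case: (end_count i x).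
  move: (H i Ht) => {H}; case: b1; case: b2; case: (i == i1); case: (i == i2) => //=;
    by rewrite ?add0n ?addn0 ?mul1n // leq_addr.
have single i0 : (\sum_(i < N) (i == i0) * end_count i x = end_count i0 x)%N.
  by rewrite (bigD1 i0) //= eqxx mul1n big1 ?addn0 // => i /negbTE ->.
by rewrite big_split /= -!big_distrr /= !single.
Qed.

Lemma handshake : (\sum_(x : V) deg x = N + N)%N.
Proof.
under eq_bigr do rewrite degree_sum.
rewrite exchange_big /= -[in RHS](card_ord N) -sum1_card -big_split /=.
apply: eq_bigr => i _; rewrite /end_count big_split /=.
have single y : (\sum_(x : V) (y == x) = 1)%N.
  by rewrite (bigD1 y) //= eqxx big1 // => x; rewrite eq_sym => /negbTE ->.
by rewrite !single.
Qed.

End Degree.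

Definition realizes_trace_entry (V : finType) (N : nat) (o tau : 'I_N -> V)
    (j : 'I_N * trcomp) : Prop :=
  exists (l : 'I_N -> R) (k : R) (f df : 'I_N -> R -> C),
    (forall i, 0 < l i) /\ 0 < k /\
    eigenpair o tau l (k ^ 2) f df /\
    simple_eigenvalue o tau l (k ^ 2) /\
    ~ supported_on_single_loop o tau l f /\
    trace_k l k f df j <> RtoC 0.

(* [p v] is the parent of [v <> r] in a spanning tree rooted at [r], [par v] the
   edge joining them and [dep v] the depth of [v]. *)
Section RootedTree.
Variables (V : finType) (N : nat) (o tau : 'I_N -> V).
Local Notation deg := (degree o tau).
Local Notation incident := (incident o tau).
Local Notation end_count := (end_count o tau).
Local Notation joins := (joins o tau).
Local Notation adjacent_in := (adjacent_in o tau).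

Variables (r : V) (p : V -> V) (par : V -> 'I_N) (dep : V -> nat).
Hypothesis dep_root : dep r = 0%N.
Hypothesis dep_parent : forall v, v != r -> (dep (p v)).+1 = dep v.
Hypothesis parent_edge : forall v, v != r -> joins (par v) (p v) v.

Lemma dep_eq0 v : dep v = 0%N -> v = r.
Proof. by move=> H; apply/eqP/negPn/negP => /dep_parent; rewrite H. Qed.

Lemma dep_parent_lt u : u != r -> (dep (p u) < dep u)%N.
Proof. by move=> /dep_parent <-. Qed.

Lemma parent_neq v : v != r -> p v != v.
Proof. by move=> /dep_parent_lt; apply: contraTneq => ->; rewrite ltnn. Qed.

Lemma eq_parentF v : v != r -> (v == p v) = false.
Proof. by move=> /parent_neq; rewrite eq_sym => /negbTE. Qed.

Lemma dep_ind (P : V -> Prop) :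
  (forall w, (forall u, (dep u < dep w)%N -> P u) -> P w) -> forall w, P w.
Proof.
move=> H w; move: {2}(dep w) (erefl (dep w)) => n.
elim/ltn_ind: n w => n IH w Hw; apply: H => u; rewrite Hw => Hu.
exact: (IH _ Hu u).
Qed.

Lemma dep_ind_down (P : V -> Prop) :
  (forall w, (forall u, (dep w < dep u)%N -> P u) -> P w) -> forall w, P w.
Proof.
move=> H w; pose M := (\max_(x : V) dep x)%N.
have HM x : (dep x <= M)%N by apply: leq_bigmax.
move: {2}(M - dep w)%N (erefl (M - dep w)%N) => n.
elim/ltn_ind: n w => n IH w Hw; apply: H => u Hu.
by apply: (IH (M - dep u)%N) => //; have := HM u; lia.
Qed.

Lemma incident_par v x : v != r -> incident (par v) x = (x == v) || (x == p v).
Proof. by move=> /parent_edge /incident_joins ->; rewrite orbC. Qed.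

Lemma end_count_par v x : v != r -> end_count (par v) x = ((x == v) + (x == p v))%N.
Proof. by move=> /parent_edge /end_count_joins ->; rewrite addnC. Qed.

Lemma par_inj u v : u != r -> v != r -> par u = par v -> u = v.
Proof.
move=> Hu Hv E.
have : incident (par v) u by rewrite -E incident_par // eqxx.
have : incident (par u) v by rewrite E incident_par // eqxx.
rewrite !incident_par // => /orP[/eqP // | /eqP Hv'] /orP[/eqP // | /eqP Hu'].
by have := dep_parent Hu; have := dep_parent Hv; rewrite -Hu' -Hv'; lia.
Qed.

Definition tree_edge i := [exists v, (v != r) && (par v == i)].
Definition child i := odflt r [pick v | (v != r) && (par v == i)].

Lemma tree_edge_par v : v != r -> tree_edge (par v).
Proof. by move=> Hv; apply/existsP; exists v; rewrite Hv eqxx. Qed.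

Lemma child_par v : v != r -> child (par v) = v.
Proof.
move=> Hv; rewrite /child; case: pickP => [u /andP[Hu /eqP] | /(_ v)] /=.
  exact: par_inj.
by rewrite Hv eqxx.
Qed.

Lemma child_neq_root i : tree_edge i -> child i != r.
Proof. by case/existsP => v /andP[Hv /eqP <-]; rewrite child_par. Qed.

Lemma par_child i : tree_edge i -> par (child i) = i.
Proof. by case/existsP => v /andP[Hv /eqP <-]; rewrite child_par. Qed.

Lemma big_tree_edge (G : 'I_N -> R) :
  \big[Rplus/0]_(i | tree_edge i) G i = \big[Rplus/0]_(u | u != r) G (par u).
Proof.
rewrite (reindex_onto par child) => [|i]; last exact: par_child.
apply: eq_bigl => u; case Hu: (u != r); first by rewrite tree_edge_par // child_par // eqxx.
move/negbFE: Hu => /eqP ->; apply/negbTE/negP => /andP[/child_neq_root].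
by move=> /[swap] /eqP ->; rewrite eqxx.
Qed.

Definition leaf v := (deg v == 1%N) && (v != r).

Lemma leaf_root : leaf r = false. Proof. by rewrite /leaf eqxx andbF. Qed.

Lemma leaf_incident x i : leaf x -> incident i x -> i = par x.
Proof.
case/andP => /eqP Hd Hx Ht; apply/eqP/negPn/negP => Hne.
by have := degree_gt1 Hne Ht; rewrite incident_par // eqxx Hd => /(_ isT).
Qed.

Lemma leaf_incident_tree x i : leaf x -> incident i x -> tree_edge i.
Proof.
by move=> Hl Ht; rewrite (leaf_incident Hl Ht); apply: tree_edge_par; case/andP: Hl.
Qed.

Lemma parent_not_leaf u : u != r -> ~~ leaf (p u).
Proof.
move=> Hu; apply/negP => Hl; have Hpu : p u != r by case/andP: Hl.
have /(par_inj Hu Hpu) E : par u = par (p u).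
  by apply: leaf_incident; rewrite // incident_par // eqxx orbT.
by have := parent_neq Hu; rewrite -E eqxx.
Qed.

Definition ancestor v w := (dep v <= dep w)%N && (iter (dep w - dep v) p w == v).

Lemma dep_iter_parent n w : (n <= dep w)%N -> dep (iter n p w) = (dep w - n)%N.
Proof.
elim: n => [|n IH] Hn /=; first by rewrite subn0.
have IH' := IH (ltnW Hn).
have Hne : iter n p w != r.
  by apply/eqP => E; move: IH'; rewrite E dep_root => /eqP; rewrite eq_sym subn_eq0 leqNgt Hn.
by have := dep_parent Hne; rewrite IH'; lia.
Qed.

Lemma ancestor_refl v : ancestor v v.
Proof. by rewrite /ancestor leqnn subnn eqxx. Qed.

Lemma ancestor_root w : ancestor r w.
Proof.
rewrite /ancestor dep_root leq0n subn0 /=; apply/eqP/dep_eq0.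
by rewrite dep_iter_parent // subnn.
Qed.

Lemma ancestor_dep v w : ancestor v w -> (dep v <= dep w)%N.
Proof. by case/andP. Qed.

Lemma ancestor_iter v w : ancestor v w -> iter (dep w - dep v) p w = v.
Proof. by case/andP => _ /eqP. Qed.

Lemma ancestor_of_root v : ancestor v r -> v = r.
Proof. by move/ancestor_dep; rewrite dep_root leqn0 => /eqP /dep_eq0. Qed.

Lemma ancestor_parent v u : u != r -> ancestor v (p u) -> ancestor v u.
Proof.
move=> Hu /andP[H1 /eqP H2]; rewrite /ancestor -(dep_parent Hu) (leq_trans H1) //.
by rewrite subSn // iterSr H2 eqxx.
Qed.

Lemma ancestor_up v u : u != v -> ancestor v u -> ancestor v (p u).
Proof.
move=> Huv H; have Hu : u != r.
  by apply: contraNneq Huv => Er; move: H; rewrite Er => /ancestor_of_root ->.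
have Hlt : (dep v < dep u)%N.
  rewrite ltn_neqAle ancestor_dep // andbT; apply: contraNneq Huv => E.
  by move: (ancestor_iter H); rewrite E subnn => /= ->.
have E1 := dep_parent Hu.
rewrite /ancestor (_ : dep v <= dep (p u))%N /=; last by lia.
have E2 : (dep u - dep v = (dep (p u) - dep v).+1)%N by lia.
by move: (ancestor_iter H); rewrite E2 iterSr => ->.
Qed.

Lemma ancestor_trans u v w : ancestor u v -> ancestor v w -> ancestor u w.
Proof.
move=> /andP[H1 /eqP H2] /andP[H3 /eqP H4]; rewrite /ancestor (leq_trans H1 H3) /=.
by rewrite (_ : dep w - dep u = (dep v - dep u) + (dep w - dep v))%N ?iterD ?H4 ?H2 //; lia.
Qed.

Lemma child_toward v w : ancestor v w -> w != v ->
  exists u, [&& u != r, p u == v & ancestor u w].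
Proof.
elim/dep_ind: w => w IH Ha Hwv.
have Hw : w != r by apply: contraNneq Hwv => Er; move: Ha; rewrite Er => /ancestor_of_root ->.
case Hpv: (p w == v); first by exists w; rewrite Hw Hpv ancestor_refl.
have [u /and3P[Hu Hpu Hau]] := IH _ (dep_parent_lt Hw) (ancestor_up Hwv Ha) (negbT Hpv).
by exists u; rewrite Hu Hpu (ancestor_parent Hw Hau).
Qed.

Lemma child_toward_unique v w u u' : u != r -> p u = v -> ancestor u w ->
  u' != r -> p u' = v -> ancestor u' w -> u = u'.
Proof.
move=> Hu Hpu Ha Hu' Hpu' Ha'.
have E : dep u = dep u' by rewrite -(dep_parent Hu) -(dep_parent Hu') Hpu Hpu'.
by rewrite -(ancestor_iter Ha) -(ancestor_iter Ha') E.
Qed.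

Lemma ancestor_child v w u : u != r -> p u = v -> ancestor u w -> ancestor v w && (w != v).
Proof.
move=> Hu Hpu Ha.
have Hvu : ancestor v u by apply: ancestor_parent; rewrite // Hpu ancestor_refl.
rewrite (ancestor_trans Hvu Ha); apply/eqP => E; move: (ancestor_dep Ha).
by rewrite E -(dep_parent Hu) Hpu ltnn.
Qed.

Lemma big_subtree (F : V -> R) v :
  \big[Rplus/0]_(w | ancestor v w) F w =
  F v + \big[Rplus/0]_(u | (u != r) && (p u == v)) \big[Rplus/0]_(w | ancestor u w) F w.
Proof.
rewrite (bigD1 v) ?ancestor_refl //=; congr (_ + _).
under [in RHS]eq_bigr do rewrite big_mkcond.
rewrite exchange_big /= big_mkcond /=; apply: eq_bigr => w _; rewrite -big_mkcondr /=.
case Hc: (ancestor v w && (w != v)).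
  case/andP: Hc => Ha Hwv; have [u0 /and3P[Hu0 /eqP Hpu0 Hau0]] := child_toward Ha Hwv.
  rewrite (big_pred1 u0) // => u /=; apply/idP/eqP => [/andP[/andP[Hu /eqP Hpu] Hau] | ->].
    exact: (child_toward_unique Hu Hpu Hau Hu0 Hpu0 Hau0).
  by rewrite Hu0 Hpu0 eqxx Hau0.
rewrite big_pred0 // => u; apply/negP => /andP[/andP[Hu /eqP Hpu] Hau].
by rewrite (ancestor_child Hu Hpu Hau) in Hc.
Qed.


Definition source_edge i := ~~ tree_edge i || leaf (child i).
Definition fed w := leaf w || [exists i, ~~ tree_edge i && incident i w].
Definition feeds i w := (~~ tree_edge i && incident i w) || [&& tree_edge i, child i == w & leaf w].

Lemma exists_source_of_fed w : fed w -> exists i, source_edge i && feeds i w.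
Proof.
case/orP => [Hl | /existsP[i /andP[Hn Hi]]]; last by exists i; rewrite /source_edge /feeds Hn Hi.
have Hw : w != r by case/andP: Hl.
by exists (par w); rewrite /source_edge /feeds tree_edge_par // child_par // Hl eqxx orbT.
Qed.

Lemma subtree_fed v : v != r -> exists2 w, ancestor v w & fed w.
Proof.
move=> Hv; have [w0 Hw0 Hmax] := @arg_maxnP _ v (ancestor v) dep (ancestor_refl v).
exists w0 => //; apply/negPn/negP; rewrite negb_or => /andP[Hl /existsP Hne].
have Hw0r : w0 != r by apply: contraNneq Hv => Er; move: Hw0; rewrite Er => /ancestor_of_root ->.
have Honly i : incident i w0 -> (true && (i == par w0)) || (false && (i == par w0)).
  rewrite orbF /=; case Htr: (tree_edge i); last by move=> Hi; case: Hne; exists i; rewrite Htr.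
  rewrite -(par_child Htr) incident_par ?child_neq_root // => /orP[/eqP -> // | /eqP E].
  have Hu := child_neq_root Htr.
  have Hau : ancestor v (child i) by apply: ancestor_parent; rewrite // -E.
  by have := Hmax _ Hau; have := dep_parent_lt Hu; rewrite -E; lia.
have := degree_le_incident2 Honly; rewrite end_count_par // eqxx eq_parentF //= => Hd.
have := degree_gt0 (_ : incident (par w0) w0); rewrite incident_par // eqxx => /(_ isT) Hd1.
by move: Hl; rewrite /leaf Hw0r andbT; apply/negPn/eqP; lia.
Qed.

Hypothesis no_degree2 : forall x, deg x <> 2%N.
Hypothesis root_choice : deg r = 1%N -> forall x, deg x = 1%N.
Hypothesis no_isolated : forall x, exists i, incident i x.

Lemma outside_fed v : v != r -> (deg v != 1%N) || (deg (p v) != 1%N) ->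
  exists2 w, ~~ ancestor v w & fed w.
Proof.
move=> Hv Hdeg.
have Hnr : ~~ ancestor v r by apply: contraNN Hv => /ancestor_of_root ->.
have [w1 Hw1 Hmax] := @arg_maxnP _ r (fun w => ~~ ancestor v w) dep Hnr.
exists w1 => //; apply/negPn/negP; rewrite negb_or => /andP[Hl /existsP Hne].
have Hw1v : w1 != v by apply: contraNneq Hw1 => ->; rewrite ancestor_refl.
have Honly i : incident i w1 ->
    ((w1 != r) && (i == par w1)) || ((p v == w1) && (i == par v)).
  case Htr: (tree_edge i); last by move=> Hi; case: Hne; exists i; rewrite Htr.
  have Hu := child_neq_root Htr.
  rewrite -(par_child Htr) incident_par // => /orP[/eqP E | /eqP E]; first by rewrite E Hu eqxx.
  case Hau: (ancestor v (child i)).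
    case Huv: (child i == v); first by move/eqP: Huv E => -> ->; rewrite !eqxx orbT.
    by have := ancestor_up (negbT Huv) Hau; rewrite -E (negbTE Hw1).
  by have := Hmax _ (negbT Hau); have := dep_parent_lt Hu; rewrite -E; lia.
have Hle2 : (deg w1 <= 2)%N.
  apply: leq_trans (degree_le_incident2 Honly) _.
  have Hpv : (w1 == p v) = (p v == w1) by rewrite eq_sym.
  case Hr: (w1 != r); case Hp: (p v == w1); rewrite ?mul0n ?add0n ?mul1n ?addn0 //.
  - by rewrite !end_count_par // eqxx eq_parentF // (negbTE Hw1v) Hpv Hp.
  - by rewrite end_count_par // eqxx eq_parentF.
  - by rewrite end_count_par // (negbTE Hw1v) Hpv Hp.
have Hw1r : w1 = r -> p v = r.
  move=> Er; apply/eqP/negPn/negP => Hpr.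
  have Hna : ~~ ancestor v (p v).
    by apply/negP => /ancestor_dep; have := dep_parent_lt Hv; lia.
  by have := Hmax _ Hna; rewrite Er dep_root -(dep_parent Hpr).
have Hge1 : (0 < deg w1)%N.
  case Hr: (w1 != r); first by apply: (degree_gt0 (i := par w1)); rewrite incident_par // eqxx.
  move/negbFE/eqP: Hr => Er; apply: (degree_gt0 (i := par v)).
  by rewrite incident_par // Hw1r // Er eqxx orbT.
have E1 : deg w1 = 1%N by have := @no_degree2 w1; lia.
case Hr: (w1 != r); first by move: Hl; rewrite /leaf E1 eqxx Hr.
by move/negbFE/eqP: Hr E1 Hdeg => -> /root_choice Hall; rewrite !Hall.
Qed.

Lemma source_outside_subtree v : v != r -> (deg v != 1%N) || (deg (p v) != 1%N) ->
  (forall i, ~~ tree_edge i -> ancestor v (o i) = ancestor v (tau i)) ->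
  exists b, source_edge b && [forall w, ancestor v w ==> ~~ feeds b w].
Proof.
move=> Hv Hdeg Hcross; have [w1 Hw1] := outside_fed Hv Hdeg.
case/orP => [Hl | /existsP[i /andP[Hn Hi]]].
  have Hw1r : w1 != r by case/andP: Hl.
  exists (par w1); rewrite /source_edge tree_edge_par // child_par // Hl /=.
  apply/forallP => w; apply/implyP => Hw; rewrite /feeds tree_edge_par // child_par //=.
  by apply: contraNN Hw1 => /andP[/eqP -> _].
exists i; rewrite /source_edge Hn /=; apply/forallP => w; apply/implyP => Hw.
rewrite /feeds (negbTE Hn) /= orbF; apply: contraNN Hw1 => Hiw.
have Ho : ancestor v (o i) by case/orP: Hiw => /eqP E; [rewrite E | rewrite Hcross // E].
by case/orP: Hi => /eqP <-; rewrite -?Hcross.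
Qed.

Lemma connect_avoiding_par v x : v != r ->
  let e := adjacent_in (predC1 (par v)) in
  (ancestor v x -> connect e x v) /\ (~~ ancestor v x -> connect e x r).
Proof.
move=> Hv e; elim/dep_ind: x => x IH.
case Hxr: (x != r); last first.
  move/negbFE/eqP: Hxr => ->; split=> [/ancestor_of_root E|_]; last exact: connect0.
  by rewrite E eqxx in Hv.
case Hxv: (x == v); first by move/eqP: Hxv => ->; rewrite ancestor_refl; split=> // _.
have Hstep : e x (p x).
  apply/existsP; exists (par x); rewrite /= /joins.
  have -> : par x != par v by apply: contraFN Hxv => /eqP /(par_inj Hxr Hv) ->.
  by case/orP: (parent_edge Hxr) => /andP[-> ->]; rewrite ?orbT.
have [IH1 IH2] := IH (p x) (dep_parent_lt Hxr).
split=> Ha; apply: connect_trans (connect1 Hstep) _.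
  exact: IH1 (ancestor_up (negbT Hxv) Ha).
by apply: IH2; apply: contraNN Ha; apply: ancestor_parent.
Qed.

Lemma crossing_connected v i : v != r -> ~~ tree_edge i ->
  ancestor v (o i) != ancestor v (tau i) ->
  forall x y, connect (adjacent_in (predC1 (par v))) x y.
Proof.
move=> Hv Hn Hneq; set e := adjacent_in _.
have Hsym : connect_sym e by apply/sym_connect_sym/adjacent_in_sym.
have reach x := connect_avoiding_par x Hv.
have cross a b : e a b -> ancestor v a -> ~~ ancestor v b -> connect e v r.
  move=> Hab Ha Hb; apply: connect_trans (connect_trans _ (connect1 Hab)) ((reach b).2 Hb).
  by rewrite Hsym; apply: (reach a).1.
have Hi : e (o i) (tau i).
  apply/existsP; exists i; rewrite /= /joins !eqxx /= andbT.
  by apply: contraNneq Hn => ->; rewrite tree_edge_par.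
have Hvr : connect e v r.
  case Ho: (ancestor v (o i)); move: Hneq; rewrite Ho; case Ht: (ancestor v (tau i)) => // _.
    by apply: (cross _ _ Hi); rewrite ?Ht.
  by apply: (cross (tau i) (o i)); rewrite ?Ho // /e adjacent_in_sym.
have Hr x : connect e x r.
  case Ha: (ancestor v x); first exact: connect_trans ((reach x).1 Ha) Hvr.
  by apply: (reach x).2; rewrite Ha.
by move=> x y; apply: connect_trans (Hr x) _; rewrite Hsym.
Qed.

Lemma exists_source (j : 'I_N) : exists b, source_edge b.
Proof.
case Ht: (tree_edge j); last by exists j; rewrite /source_edge Ht.
have [w _ /exists_source_of_fed[b /andP[Hb _]]] := subtree_fed (child_neq_root Ht).
by exists b.
Qed.

Lemma card_tree_edge : #|[pred i | tree_edge i]| = #|V|.-1.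
Proof.
have -> : #|[pred i | tree_edge i]| = #|[set par u | u in predC1 r]|.
  apply: eq_card => i; apply/idP/imsetP => [Ht | [u]].
    by exists (child i); rewrite ?inE ?child_neq_root ?par_child.
  by rewrite !inE => Hu ->; apply: tree_edge_par.
rewrite card_in_imset => [|u1 u2]; last by rewrite !inE; apply: par_inj.
by rewrite cardC1.
Qed.

Lemma unique_source_degree j0 : ~~ tree_edge j0 -> (forall i, source_edge i -> i = j0) ->
  forall x, (3 <= deg x)%N.
Proof.
move=> Hj0 Honly x; have [i Hi] := no_isolated x.
suff : deg x <> 1%N by have := degree_gt0 Hi; have := @no_degree2 x; lia.
move=> Hx1; case Hxr: (x != r).
  have Hl : leaf x by rewrite /leaf Hx1 eqxx Hxr.
  have := Honly (par x); rewrite /source_edge tree_edge_par // child_par // Hl orbT.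
  by move=> /(_ isT) E; rewrite -E tree_edge_par in Hj0.
move/negbFE/eqP: Hxr Hx1 => -> /root_choice Hall.
have end_root y : incident j0 y -> y = r.
  move=> Hy; apply/eqP/negPn/negP => Hyr.
  have Hl : leaf y by rewrite /leaf Hall eqxx Hyr.
  by rewrite (leaf_incident_tree Hl Hy) in Hj0.
have Hloop : o j0 = tau j0.
  by rewrite (end_root _ (incident_o o tau j0)) (end_root _ (incident_tau o tau j0)).
by have := degree_loop_gt1 Hloop; rewrite Hall.
Qed.

(* Otherwise [j0] would be the only edge outside the tree, so [N = #|V|], while all
   degrees would be at least 3, contradicting the handshake lemma. *)
Lemma another_source j0 : ~~ tree_edge j0 -> exists2 b, source_edge b & b != j0.
Proof.
move=> Hj0; case: (boolP [exists b, source_edge b && (b != j0)]) => [/existsP[b /andP[]] | H].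
  by exists b.
have Honly i : source_edge i -> i = j0.
  by move=> Hi; apply/eqP/negPn/negP => Hne; case/negP: H; apply/existsP; exists i; rewrite Hi.
have HV : (0 < #|V|)%N by apply/card_gt0P; exists r.
have HN : N = #|V|.
  have := cardC [pred i | tree_edge i]; rewrite card_ord card_tree_edge.
  have -> : #|[predC [pred i | tree_edge i]]| = 1%N.
    rewrite -(card1 j0); apply: eq_card => i; rewrite !inE.
    by apply/idP/eqP => [Hn | ->] //; apply: Honly; rewrite /source_edge Hn.
  lia.
have : (\sum_(x : V) 3 <= \sum_(x : V) deg x)%N.
  by apply: leq_sum => x _; exact: unique_source_degree Hj0 Honly x.
by rewrite handshake sum_nat_const (@eq_card _ _ V) // -HN => Hle; exfalso; lia.
Qed.

Section Construction.
Variable b : 'I_N.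
Hypothesis source_b : source_edge b.

Definition nsources := #|[pred i | source_edge i]|.
Definition charge i := if i == b then 1 - INR nsources else 1.

Definition vertex_charge w :=
  \big[Rplus/0]_(i | ~~ tree_edge i)
     ((if o i == w then charge i / 2 else 0) + (if tau i == w then charge i / 2 else 0))
  + (if leaf w then charge (par w) else 0).
Definition subtree_charge v := \big[Rplus/0]_(w | ancestor v w) vertex_charge w.
Definition slope i := if tree_edge i then subtree_charge (child i) else charge i / 2.
Definition edge_len i :=
  if tree_edge i then (if leaf (child i) then pendant_len (slope i) else 2 * PI)
  else cycle_len (slope i).
(* Tree edges are parametrised from the parent end. *)
Definition reversed i := tree_edge i && (o i == child i).
Definition eigf i t :=
  if reversed i then profile (slope i) (edge_len i - t) else profile (slope i) t.
Definition deigf i t :=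
  if reversed i then - dprofile (slope i) (edge_len i - t) else dprofile (slope i) t.

Lemma edge_len_gt0 i : 0 < edge_len i.
Proof.
rewrite /edge_len; case: (tree_edge i); last exact: cycle_len_gt0.
by case: (leaf _); [exact: pendant_len_gt0 | have := PI_RGT_0; lra].
Qed.

Lemma eigf_der i t : is_derive (eigf i) t (deigf i t).
Proof.
by rewrite /eigf /deigf; case: (reversed i); [apply: profile_rev_der | apply: profile_der].
Qed.

Lemma deigf_der i t : is_derive (deigf i) t (- eigf i t).
Proof.
by rewrite /eigf /deigf; case: (reversed i); [apply: dprofile_rev_der | apply: dprofile_der].
Qed.

Lemma tree_edge_ends i : tree_edge i ->
  [/\ o i = p (child i), tau i = child i & reversed i = false] \/
  [/\ o i = child i, tau i = p (child i) & reversed i = true].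
Proof.
move=> Ht; have Hu := child_neq_root Ht.
have := parent_edge Hu; rewrite par_child // /reversed Ht /=.
case/orP => /andP[/eqP -> /eqP ->]; last by right; rewrite eqxx.
by left; split=> //; apply/negbTE/parent_neq.
Qed.

Definition outflux v i :=
  (if o i == v then deigf i 0 else 0) - (if tau i == v then deigf i (edge_len i) else 0).

Lemma outflux_nontree v i : ~~ tree_edge i ->
  outflux v i = (if o i == v then charge i / 2 else 0) + (if tau i == v then charge i / 2 else 0).
Proof.
move=> Hn; rewrite /outflux /deigf /reversed /edge_len /slope (negbTE Hn) /=.
by rewrite dprofile0 dprofile_cycle_len; case: (o i == v); case: (tau i == v); ring.
Qed.

Lemma outflux_tree v i : tree_edge i ->
  outflux v i = (if p (child i) == v then slope i else 0)
              - (if (child i == v) && ~~ leaf (child i) then slope i else 0).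
Proof.
move=> Ht; rewrite /outflux /deigf /edge_len Ht.
case: (tree_edge_ends Ht) => -[-> -> ->]; rewrite ?Rminus_0_r ?Rminus_eq_0;
  case: (leaf (child i)); rewrite /= ?dprofile_pendant_len ?dprofile_2PI dprofile0;
  by case: (p (child i) == v); case: (child i == v) => /=; ring.
Qed.

Lemma big_outflux v : \big[Rplus/0]_(i < N) outflux v i =
  vertex_charge v - (if leaf v then charge (par v) else 0)
  + \big[Rplus/0]_(u | (u != r) && (p u == v)) subtree_charge u
  - (if (v != r) && ~~ leaf v then subtree_charge v else 0).
Proof.
rewrite (bigID tree_edge) /= Rplus_comm.
have -> : \big[Rplus/0]_(i | ~~ tree_edge i) outflux v i =
          vertex_charge v - (if leaf v then charge (par v) else 0).
  by rewrite /vertex_charge; under eq_bigr => i Hi do rewrite outflux_nontree //; ring.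
suff -> : \big[Rplus/0]_(i | tree_edge i) outflux v i =
  \big[Rplus/0]_(u | (u != r) && (p u == v)) subtree_charge u
  - (if (v != r) && ~~ leaf v then subtree_charge v else 0) by ring.
under eq_bigr => i Hi do rewrite outflux_tree //.
rewrite big_tree_edge.
under eq_bigr => u Hu do rewrite /slope tree_edge_par // child_par //.
rewrite big_Rminus -big_mkcondr /=; congr (_ - _).
case Hv: (v != r) => /=.
  rewrite (bigD1 v) //= eqxx /= big1 ?Rplus_0_r // => u /andP[_ Huv].
  by rewrite (negbTE Huv).
rewrite big1 // => u Hu; case Huv: (u == v) => //=.
by move/eqP: Huv Hu => ->; rewrite Hv.
Qed.

Lemma sum_charge : \big[Rplus/0]_(i | source_edge i) charge i = 0.
Proof.
rewrite (bigD1 b) //= {1}/charge eqxx.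
rewrite (eq_bigr (fun _ => 1)) => [|i /andP[_ /negbTE Hi]]; last by rewrite /charge Hi.
have -> : nsources = (1 + #|(fun i => source_edge i && (i != b))|)%N.
  rewrite /nsources (cardD1 b) inE source_b; congr (_ + _)%N.
  by apply: eq_card => i; rewrite !inE andbC.
by rewrite big_R_card plus_INR /=; set k := INR _; ring.
Qed.

Lemma subtree_charge_root : subtree_charge r = 0.
Proof.
rewrite -sum_charge /subtree_charge (eq_bigl predT) => [|w]; last by rewrite ancestor_root.
rewrite /vertex_charge big_split /= exchange_big /= [RHS](bigID tree_edge) /= [RHS]Rplus_comm.
congr (_ + _).
  rewrite [RHS](eq_bigl (fun i => ~~ tree_edge i)) => [|i]; last first.
    by rewrite /source_edge; case: (tree_edge i); case: (leaf (child i)).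
  by apply: eq_bigr => i _; rewrite big_split /= !big_R_pick; field.
rewrite [RHS](eq_bigl (fun i => tree_edge i && leaf (child i))) => [|i]; last first.
  by rewrite /source_edge; case: (tree_edge i); case: (leaf (child i)).
rewrite big_mkcondr /= big_tree_edge (bigD1 r) //= leaf_root Rplus_0_l.
by apply: eq_bigr => u Hu; rewrite child_par.
Qed.

Lemma kirchhoff_outflux v : \big[Rplus/0]_(i < N) outflux v i = 0.
Proof.
case Hl: (leaf v).
  rewrite big1 // => i _; case Ht: (incident i v); last first.
    have /norP[/negbTE Ho /negbTE Ht'] : ~~ ((o i == v) || (tau i == v)) by exact: negbT Ht.
    by rewrite /outflux Ho Ht'; ring.
  have Hv : v != r by case/andP: Hl.
  rewrite (leaf_incident Hl Ht) outflux_tree ?tree_edge_par // child_par // Hl eqxx.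
  by rewrite (negbTE (parent_neq Hv)) /=; ring.
rewrite big_outflux Hl.
have -> : \big[Rplus/0]_(u | (u != r) && (p u == v)) subtree_charge u =
          subtree_charge v - vertex_charge v.
  by rewrite /subtree_charge big_subtree; ring.
case Hv: (v != r) => /=; first ring.
by move/negbFE/eqP: Hv => ->; rewrite subtree_charge_root; ring.
Qed.

Definition vertex_value x :=
  if leaf x then profile (slope (par x)) (edge_len (par x)) else 1.

Lemma vertex_value_neq0 x : vertex_value x <> 0.
Proof.
rewrite /vertex_value; case Hl: (leaf x); last lra.
have Hx : x != r by case/andP: Hl.
by rewrite /edge_len tree_edge_par // child_par // Hl; apply: profile_pendant_len_neq0.
Qed.

Lemma eigf0 i : eigf i 0 = vertex_value (o i).
Proof.
rewrite /vertex_value /eigf; case Hl: (leaf (o i)).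
  have Hi := leaf_incident Hl (incident_o o tau i); have Hv : o i != r by case/andP: Hl.
  have Hc : child i = o i by rewrite {1}Hi child_par.
  by rewrite /reversed (leaf_incident_tree Hl (incident_o o tau i)) Hc eqxx /= Rminus_0_r -Hi.
case Hf: (reversed i); last exact: profile0.
move: Hf => /andP[Ht /eqP Ho].
by rewrite /edge_len Ht -Ho Hl Rminus_0_r profile_2PI.
Qed.

Lemma eigf_len i : eigf i (edge_len i) = vertex_value (tau i).
Proof.
rewrite /vertex_value /eigf; case Hl: (leaf (tau i)).
  have Hi := leaf_incident Hl (incident_tau o tau i); have Hv : tau i != r by case/andP: Hl.
  have Hc : child i = tau i by rewrite {1}Hi child_par.
  case: (tree_edge_ends (leaf_incident_tree Hl (incident_tau o tau i))) => -[Ho Ht ->].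
    by rewrite -Hi.
  by move: (parent_neq Hv); rewrite -{1}Hc -Ht eqxx.
case Hf: (reversed i); first by rewrite Rminus_eq_0 profile0.
rewrite /edge_len; case Ht: (tree_edge i); last exact: profile_cycle_len.
case: (tree_edge_ends Ht) => -[_ Htau Hf']; last by rewrite Hf' in Hf.
by rewrite -Htau Hl profile_2PI.
Qed.

Lemma eigf_solution :
  solution o tau edge_len 1 (fun i t => RtoC (eigf i t)) (fun i t => RtoC (deigf i t)).
Proof.
split.
- by move=> i t _; apply/is_deriveC_RtoC/eigf_der.
- move=> i t _; rewrite -RtoC_mult (_ : -1 * eigf i t = - eigf i t); last ring.
  exact/is_deriveC_RtoC/deigf_der.
- by split=> i j E; rewrite ?eigf0 ?eigf_len E.
- move=> v; rewrite -!big_RtoC -RtoC_minus; congr RtoC.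
  rewrite big_mkcond [X in _ - X]big_mkcond -big_Rminus.
  exact: kirchhoff_outflux.
Qed.

Lemma nsources_ge2 : ~~ tree_edge b -> (2 <= nsources)%N.
Proof.
move=> Hb; have [a Ha Hab] := another_source Hb.
rewrite /nsources (cardD1 b) inE source_b add1n ltnS.
by apply/card_gt0P; exists a; rewrite !inE Hab Ha.
Qed.

Lemma slope_nontree_neq0 i : ~~ tree_edge i -> slope i <> 0.
Proof.
move=> Hn; rewrite /slope (negbTE Hn) /charge; case: eqP => [E | _]; last lra.
by rewrite E in Hn; have /leP/le_INR /= := nsources_ge2 Hn; lra.
Qed.

Lemma edge_len_range i : 0 <= edge_len i <= edge_len i.
Proof. by have := edge_len_gt0 i; lra. Qed.

Lemma edge_0_range i : 0 <= 0 <= edge_len i.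
Proof. by have := edge_len_gt0 i; lra. Qed.

Section Simplicity.
Variables (g dg : 'I_N -> R -> C).
Hypothesis g_sol : solution o tau edge_len 1 g dg.

Definition gvalue x := match [pick i | o i == x] with
  | Some i => g i 0
  | None => if [pick i | tau i == x] is Some i then g i (edge_len i) else RtoC 0
  end.

Lemma gvalue_o i : g i 0 = gvalue (o i).
Proof.
case: g_sol => _ _ [C1 _ _] _; rewrite /gvalue.
by case: pickP => [j /eqP Hj | /(_ i)]; [apply: C1 | rewrite eqxx].
Qed.

Lemma gvalue_tau i : g i (edge_len i) = gvalue (tau i).
Proof.
case: g_sol => _ _ [_ C2 C3] _; rewrite /gvalue.
case: pickP => [j /eqP Hj | _]; first by symmetry; apply: C2.
by case: pickP => [j /eqP Hj | /(_ i)]; [apply: C3 | rewrite eqxx].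
Qed.

Local Notation a := (gvalue r).
Local Notation F i t := (RtoC (eigf i t)).
Local Notation dF i t := (RtoC (deigf i t)).

Definition gap i t := Cminus (g i t) (Cmult a (F i t)).
Definition dgap i t := Cminus (dg i t) (Cmult a (dF i t)).

Lemma gap0 i t : g i t = Cmult a (F i t) -> gap i t = RtoC 0.
Proof. by rewrite /gap => ->; ring. Qed.

Lemma dgap0 i t : dg i t = Cmult a (dF i t) -> dgap i t = RtoC 0.
Proof. by rewrite /dgap => ->; ring. Qed.

Lemma gap_closed_form i t : 0 <= t <= edge_len i ->
  gap i t = Cplus (Cmult (gap i 0) (RtoC (cos t))) (Cmult (dgap i 0) (RtoC (sin t))) /\
  dgap i t = Cplus (Cmult (gap i 0) (RtoC (- sin t))) (Cmult (dgap i 0) (RtoC (cos t))).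
Proof.
move=> Ht; case: g_sol => Hg Hdg _ _; case: eigf_solution => Hf Hdf _ _.
have [G1 G2] := oscillator_C (Hg i) (Hdg i) Ht.
have [F1 F2] := oscillator_C (Hf i) (Hdf i) Ht.
by rewrite /gap /dgap G1 G2 F1 F2; split; ring.
Qed.

Definition agrees i := forall t, 0 <= t <= edge_len i ->
  g i t = Cmult a (F i t) /\ dg i t = Cmult a (dF i t).

Lemma agrees_of_start i : gap i 0 = RtoC 0 -> dgap i 0 = RtoC 0 -> agrees i.
Proof.
move=> H0 H1 t Ht; have [E1 E2] := gap_closed_form Ht.
by split; apply: Cminus_eq0; rewrite -/(gap i t) -/(dgap i t) ?E1 ?E2 H0 H1; ring.
Qed.

Lemma agrees_of_values i : sin (edge_len i) <> 0 ->
  gap i 0 = RtoC 0 -> gap i (edge_len i) = RtoC 0 -> agrees i.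
Proof.
move=> Hs H0 HL; apply: agrees_of_start => //; apply: (Cmult_RtoC_eq0 Hs).
have [E1 _] := gap_closed_form (edge_len_range i).
by rewrite HL H0 in E1; rewrite E1; ring.
Qed.

Lemma agrees_of_value_slope i : cos (edge_len i) <> 0 ->
  gap i 0 = RtoC 0 -> dgap i (edge_len i) = RtoC 0 -> agrees i.
Proof.
move=> Hc H0 HL; apply: agrees_of_start => //; apply: (Cmult_RtoC_eq0 Hc).
have [_ E2] := gap_closed_form (edge_len_range i).
by rewrite HL H0 in E2; rewrite E2; ring.
Qed.

Lemma agrees_of_slope_value i : cos (edge_len i) <> 0 ->
  dgap i 0 = RtoC 0 -> gap i (edge_len i) = RtoC 0 -> agrees i.
Proof.
move=> Hc H0 HL; apply: agrees_of_start => //; apply: (Cmult_RtoC_eq0 Hc).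
have [E1 _] := gap_closed_form (edge_len_range i).
by rewrite HL H0 in E1; rewrite E1; ring.
Qed.

Lemma gvalue_nonleaf x : ~~ leaf x -> gvalue x = a.
Proof.
elim/dep_ind: x => x IH Hl; case Hx: (x != r); last by move/negbFE/eqP: Hx => ->.
have Hlen : edge_len (par x) = 2 * PI.
  by rewrite /edge_len tree_edge_par // child_par // (negbTE Hl).
have Hper : g (par x) (edge_len (par x)) = g (par x) 0.
  case: g_sol => Hg Hdg _ _.
  have [-> _] := oscillator_C (Hg (par x)) (Hdg (par x)) (edge_len_range (par x)).
  by rewrite Hlen cos_2PI sin_2PI; ring.
rewrite gvalue_tau gvalue_o in Hper.
rewrite -(IH (p x) (dep_parent_lt Hx) (parent_not_leaf Hx)).
by case/orP: (parent_edge Hx) => /andP[/eqP Ho /eqP Ht]; rewrite Ho Ht in Hper.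
Qed.

Lemma gap_o i : ~~ leaf (o i) -> gap i 0 = RtoC 0.
Proof.
move=> Hl; apply: gap0.
by rewrite gvalue_o eigf0 gvalue_nonleaf // /vertex_value (negbTE Hl); ring.
Qed.

Lemma gap_tau i : ~~ leaf (tau i) -> gap i (edge_len i) = RtoC 0.
Proof.
move=> Hl; apply: gap0.
by rewrite gvalue_tau eigf_len gvalue_nonleaf // /vertex_value (negbTE Hl); ring.
Qed.

Lemma agrees_nontree i : ~~ tree_edge i -> agrees i.
Proof.
move=> Hn; have Hnl x : incident i x -> ~~ leaf x.
  by move=> Hx; apply/negP => Hl; case/negP: Hn; apply: leaf_incident_tree Hl Hx.
apply: agrees_of_values.
- by rewrite /edge_len (negbTE Hn); apply/sin_cycle_len_neq0/slope_nontree_neq0.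
- exact/gap_o/Hnl/incident_o.
- exact/gap_tau/Hnl/incident_tau.
Qed.

Definition gflux x i := Cminus (if o i == x then dg i 0 else RtoC 0)
                               (if tau i == x then dg i (edge_len i) else RtoC 0).

Lemma gflux_agrees x i : agrees i -> gflux x i = Cmult a (RtoC (outflux x i)).
Proof.
move=> H; have [_ E0] := H 0 (edge_0_range i); have [_ EL] := H _ (edge_len_range i).
by rewrite /gflux /outflux E0 EL; case: (o i == x); case: (tau i == x);
  rewrite /= RtoC_minus; ring.
Qed.

Lemma gflux_not_incident x i : ~~ incident i x -> gflux x i = Cmult a (RtoC (outflux x i)).
Proof.
rewrite negb_or => /andP[/negbTE Ho /negbTE Ht].
by rewrite /gflux /outflux Ho Ht RtoC_minus; ring.
Qed.

Lemma gflux_last x i0 : (forall i, i != i0 -> gflux x i = Cmult a (RtoC (outflux x i))) ->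
  gflux x i0 = Cmult a (RtoC (outflux x i0)).
Proof.
move=> H; have T : \big[Cplus/RtoC 0]_(i < N) gflux x i = RtoC 0.
  case: g_sol => _ _ _ /(_ x).
  by rewrite big_mkcond [X in Cminus _ X]big_mkcond -big_Cminus.
have R0 := kirchhoff_outflux x; rewrite (bigD1 i0) //= in R0.
rewrite (bigD1 i0) //= (eq_bigr _ H) big_Cscal -big_RtoC in T.
move: T R0; set X := \big[Rplus/0]_(i < N | i != i0) outflux x i => T R0.
rewrite (_ : X = - outflux x i0) ?RtoC_opp in T; last lra.
by apply: Cminus_eq0; rewrite -T; ring.
Qed.

Lemma agrees_tree_edge u : u != r -> cos (edge_len (par u)) <> 0 ->
  gflux u (par u) = Cmult a (RtoC (outflux u (par u))) -> agrees (par u).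
Proof.
move=> Hu Hc; have Hpu := parent_not_leaf Hu.
case/orP: (parent_edge Hu) => /andP[/eqP Ho /eqP Ht].
  rewrite /gflux /outflux Ho Ht eqxx (negbTE (parent_neq Hu)) /= RtoC_minus => K.
  apply: agrees_of_value_slope => //; first by apply: gap_o; rewrite Ho.
  by apply: dgap0; transitivity (Copp (Cminus (RtoC 0) (dg (par u) (edge_len (par u)))));
    [ring | rewrite K; ring].
rewrite /gflux /outflux Ho Ht eqxx (negbTE (parent_neq Hu)) /= RtoC_minus => K.
apply: agrees_of_slope_value => //; last by apply: gap_tau; rewrite Ht.
by apply: dgap0; transitivity (Cminus (dg (par u) 0) (RtoC 0)); [ring | rewrite K; ring].
Qed.

Lemma agrees_pendant u : leaf u -> agrees (par u).
Proof.
move=> Hl; have Hu : u != r by case/andP: Hl.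
apply: agrees_tree_edge => //.
  by rewrite /edge_len tree_edge_par // child_par // Hl; apply: cos_pendant_len_neq0.
apply: gflux_last => i Hi; apply: gflux_not_incident.
by apply/negP => /(leaf_incident Hl) E; rewrite E eqxx in Hi.
Qed.

Lemma agrees_inner u : u != r -> ~~ leaf u -> agrees (par u).
Proof.
elim/dep_ind_down: u => u IH Hu Hl; apply: agrees_tree_edge => //.
  by rewrite /edge_len tree_edge_par // child_par // (negbTE Hl) cos_2PI; lra.
apply: gflux_last => i Hi; case Hiu: (incident i u).
  apply: gflux_agrees; case Htr: (tree_edge i); last by apply: agrees_nontree; rewrite Htr.
  have Hw := child_neq_root Htr; rewrite -(par_child Htr) in Hi Hiu *.
  move: Hiu; rewrite incident_par // => /orP[/eqP E | /eqP E]; first by rewrite E eqxx in Hi.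
  case Hlw: (leaf (child i)); first exact: agrees_pendant.
  by apply: IH; rewrite ?Hlw // E; apply: dep_parent_lt.
by apply: gflux_not_incident; rewrite Hiu.
Qed.

Lemma agrees_all i : agrees i.
Proof.
case Htr: (tree_edge i); last by apply: agrees_nontree; rewrite Htr.
rewrite -(par_child Htr); have Hu := child_neq_root Htr.
by case Hl: (leaf (child i)); [apply: agrees_pendant | apply: agrees_inner; rewrite ?Hl].
Qed.

End Simplicity.

Lemma nontree_deposit w i : (forall j, feeds j w -> charge j = 1) -> ~~ tree_edge i ->
  let d := (if o i == w then charge i / 2 else 0) + (if tau i == w then charge i / 2 else 0) in
  0 <= d /\ ((o i == w) || (tau i == w) -> 0 < d).
Proof.
move=> H Hn d.
have Hc : (o i == w) || (tau i == w) -> charge i = 1.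
  by move=> Hi; apply: H; apply/orP; left; rewrite Hn.
rewrite /d; case Ho: (o i == w); case Ht: (tau i == w) => /=; last by split=> [|//]; lra.
all: by rewrite Hc ?Ho ?Ht ?orbT //; split=> [|_]; lra.
Qed.

Lemma vertex_charge_ge0 w : (forall i, feeds i w -> charge i = 1) -> 0 <= vertex_charge w.
Proof.
move=> H; rewrite /vertex_charge.
have : 0 <= \big[Rplus/0]_(i | ~~ tree_edge i)
  ((if o i == w then charge i / 2 else 0) + (if tau i == w then charge i / 2 else 0)).
  by apply: big_R_ge0 => i Hn; case: (nontree_deposit H Hn).
case Hl: (leaf w); last lra.
have Hw : w != r by case/andP: Hl.
rewrite H; first lra.
by rewrite /feeds tree_edge_par // child_par // eqxx Hl orbT.
Qed.

Lemma vertex_charge_gt0 w : (forall i, feeds i w -> charge i = 1) -> fed w ->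
  0 < vertex_charge w.
Proof.
move=> H Hfed.
have Hsum (P : pred 'I_N) : (forall i, P i -> ~~ tree_edge i) ->
  0 <= \big[Rplus/0]_(i | P i)
         ((if o i == w then charge i / 2 else 0) + (if tau i == w then charge i / 2 else 0)).
  by move=> HP; apply: big_R_ge0 => i /HP Hn; case: (nontree_deposit H Hn).
have Hleaf : 0 <= if leaf w then charge (par w) else 0.
  case Hl: (leaf w); last lra.
  have Hw : w != r by case/andP: Hl.
  by rewrite H ?/feeds ?tree_edge_par // ?child_par // ?eqxx ?Hl ?orbT //; lra.
rewrite /vertex_charge; case/orP: Hfed => [Hl | /existsP[i /andP[Hn Hi]]].
  have Hw : w != r by case/andP: Hl.
  apply: Rplus_le_lt_0_compat; first exact: Hsum.
  by rewrite Hl H ?/feeds ?tree_edge_par // ?child_par // ?eqxx ?Hl ?orbT //; lra.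
rewrite (bigD1 i) //=; apply: Rplus_lt_le_0_compat => //.
have [_ /(_ Hi) Hpos] := nontree_deposit H Hn.
by apply: Rplus_lt_le_0_compat => //; apply: Hsum => j /andP[].
Qed.

Lemma subtree_charge_gt0 v : v != r -> [forall w, ancestor v w ==> ~~ feeds b w] ->
  0 < subtree_charge v.
Proof.
move=> Hv Hb.
have H1 w : ancestor v w -> forall i, feeds i w -> charge i = 1.
  move=> Hw i Hi; rewrite /charge; case: eqP => // E.
  by move/forallP/(_ w): Hb; rewrite Hw -E Hi.
have [w0 Hw0 Hfed] := subtree_fed Hv.
rewrite /subtree_charge (bigD1 w0) //=.
apply: Rplus_lt_le_0_compat; first exact: vertex_charge_gt0 (H1 _ Hw0) Hfed.
by apply: big_R_ge0 => w /andP[Hw _]; apply: vertex_charge_ge0 (H1 _ Hw).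
Qed.

Lemma deigf0_neq0 i : deg (o i) <> 1%N -> slope i <> 0 -> deigf i 0 <> 0.
Proof.
move=> Hd Hs; rewrite /deigf; case Hf: (reversed i); last by rewrite dprofile0.
move: Hf => /andP[Ht /eqP Ho].
by rewrite /edge_len Ht -Ho /leaf (introF eqP Hd) Rminus_0_r dprofile_2PI; lra.
Qed.

Lemma deigf_len_neq0 i : deg (tau i) <> 1%N -> slope i <> 0 -> - deigf i (edge_len i) <> 0.
Proof.
move=> Hd Hs; rewrite /deigf; case Hf: (reversed i); first by rewrite Rminus_eq_0 dprofile0; lra.
rewrite /edge_len; case Ht: (tree_edge i); last by rewrite dprofile_cycle_len; lra.
case: (tree_edge_ends Ht) => -[_ Htau Hf']; last by rewrite Hf' in Hf.
by rewrite -Htau /leaf (introF eqP Hd) dprofile_2PI; lra.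
Qed.

Lemma eigf_eigenpair :
  eigenpair o tau edge_len 1 (fun i t => RtoC (eigf i t)) (fun i t => RtoC (deigf i t)).
Proof.
split; first exact: eigf_solution.
exists b, 0; split; first exact: edge_0_range.
by apply: RtoC_neq0; rewrite eigf0; apply: vertex_value_neq0.
Qed.

Lemma eigf_simple : simple_eigenvalue o tau edge_len 1.
Proof.
exists (fun i t => RtoC (eigf i t)), (fun i t => RtoC (deigf i t)).
split; first exact: eigf_eigenpair.
move=> g dg Hg; exists (gvalue g r) => i t Ht.
by case: (agrees_all Hg Ht).
Qed.

Lemma eigf_not_single_loop :
  ~ supported_on_single_loop o tau edge_len (fun i t => RtoC (eigf i t)).
Proof.
case=> i0 [Hloop Hz].
have Honly i : incident i (o i0) -> (true && (i == i0)) || (false && (i == i0)).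
  move=> _; rewrite orbF /=; case: eqP => // Hne; exfalso.
  have /RtoC_neq0 := @vertex_value_neq0 (o i); rewrite -eigf0; apply.
  by apply: Hz => //; apply: edge_0_range.
have := degree_le_incident2 Honly; rewrite mul1n mul0n addn0 end_count_loop // => Hle.
by apply: (@no_degree2 (o i0)); have := degree_loop_gt1 Hloop; lia.
Qed.

Lemma eigf_realizes (j : 'I_N * trcomp) : ~ forced_zero o tau j ->
  (j.2 = trB \/ j.2 = trD -> slope j.1 <> 0) -> realizes_trace_entry o tau j.
Proof.
case: j => i c Hnf /= Hs.
exists edge_len, 1, (fun i t => RtoC (eigf i t)), (fun i t => RtoC (deigf i t)).
rewrite pow1; split; first exact: edge_len_gt0.
split; first lra.
split; first exact: eigf_eigenpair.
split; first exact: eigf_simple.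
split; first exact: eigf_not_single_loop.
case: c Hnf Hs => /= Hnf Hs; rewrite ?Cdiv_RtoC1 -?RtoC_opp; apply: RtoC_neq0.
- by rewrite eigf0; apply: vertex_value_neq0.
- by apply: deigf0_neq0 => //; apply: Hs; left.
- by rewrite eigf_len; apply: vertex_value_neq0.
- by apply: deigf_len_neq0 => //; apply: Hs; right.
Qed.

End Construction.

Lemma tree_edge_end_degree i x : tree_edge i -> incident i x -> deg x <> 1%N ->
  (deg (child i) != 1%N) || (deg (p (child i)) != 1%N).
Proof.
move=> Ht; rewrite -{1}(par_child Ht) incident_par ?child_neq_root //.
by case/orP => /eqP -> /eqP ->; rewrite ?orbT.
Qed.

Lemma nonzero_slope_source i :
  (tree_edge i -> (deg (child i) != 1%N) || (deg (p (child i)) != 1%N)) ->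
  (tree_edge i -> forall k, ~~ tree_edge k ->
     ancestor (child i) (o k) = ancestor (child i) (tau k)) ->
  exists2 b, source_edge b & slope b i <> 0.
Proof.
case Ht: (tree_edge i) => Hdeg Hcross.
  have Hv := child_neq_root Ht.
  have [b /andP[Hb Hout]] := source_outside_subtree Hv (Hdeg isT) (Hcross isT).
  by exists b => //; rewrite /slope Ht; have := subtree_charge_gt0 Hv Hout; lra.
have [b Hb Hbi] := another_source (negbT Ht).
by exists b => //; rewrite /slope Ht /charge eq_sym (negbTE Hbi); lra.
Qed.

Lemma realizes_of_tree (j : 'I_N * trcomp) : ~ forced_zero o tau j ->
  (tree_edge j.1 -> forall k, ~~ tree_edge k ->
     ancestor (child j.1) (o k) = ancestor (child j.1) (tau k)) ->
  realizes_trace_entry o tau j.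
Proof.
case: j => i c Hnf /= Hcross; have [b0 Hb0] := exists_source i.
suff [b Hb Hs] : exists2 b, source_edge b & (c = trB \/ c = trD -> slope b i <> 0).
  exact: (eigf_realizes Hb (j := (i, c))).
case: c Hnf => /= Hnf; try by exists b0 => // -[].
- have Hdeg Ht := tree_edge_end_degree Ht (incident_o o tau i) Hnf.
  by have [b Hb Hs] := nonzero_slope_source Hdeg Hcross; exists b.
- have Hdeg Ht := tree_edge_end_degree Ht (incident_tau o tau i) Hnf.
  by have [b Hb Hs] := nonzero_slope_source Hdeg Hcross; exists b.
Qed.

End RootedTree.

Section BreadthFirstTree.
Variables (V : finType) (N : nat) (o tau : 'I_N -> V) (E : pred 'I_N) (r : V) (i0 : 'I_N).
Local Notation e := (adjacent_in o tau E).
Hypothesis reachable : forall v, connect e r v.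

Fixpoint walk_from_root (n : nat) (v : V) : bool :=
  if n is n'.+1 then [exists w, walk_from_root n' w && e w v] else v == r.

Lemma walk_from_root_path s x n :
  walk_from_root n x -> path e x s -> walk_from_root (n + size s) (last x s).
Proof.
elim: s x n => [|y s IH] x n Hw /=; first by rewrite addn0.
case/andP => Hxy Hp; rewrite addnS -addSn; apply: IH => //=.
by apply/existsP; exists x; rewrite Hw Hxy.
Qed.

Lemma exists_walk_from_root v : exists n, walk_from_root n v.
Proof.
have /connectP[s Hp ->] := reachable v.
by exists (0 + size s)%N; apply: walk_from_root_path Hp; rewrite /= eqxx.
Qed.

Definition bfs_dep v := ex_minn (exists_walk_from_root v).
Definition bfs_parent v := odflt r [pick w | walk_from_root (bfs_dep v).-1 w && e w v].
Definition bfs_par v := odflt i0 [pick i | E i && joins o tau i (bfs_parent v) v].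

Lemma walk_bfs_dep v : walk_from_root (bfs_dep v) v.
Proof. by rewrite /bfs_dep; case: ex_minnP. Qed.

Lemma bfs_dep_min v n : walk_from_root n v -> (bfs_dep v <= n)%N.
Proof. by rewrite /bfs_dep; case: ex_minnP => m _; apply. Qed.

Lemma bfs_dep_root : bfs_dep r = 0%N.
Proof. by apply/eqP; rewrite -leqn0; apply: bfs_dep_min; rewrite /= eqxx. Qed.

Lemma bfs_parentP v : v != r ->
  walk_from_root (bfs_dep v).-1 (bfs_parent v) && e (bfs_parent v) v.
Proof.
move=> Hv; have := walk_bfs_dep v; case Hd: (bfs_dep v) => [|d] /=.
  by move/eqP => E0; rewrite E0 eqxx in Hv.
move=> /existsP[w Hw]; rewrite /bfs_parent Hd /=.
by case: pickP => [w' -> // | /(_ w)]; rewrite Hw.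
Qed.

Lemma bfs_dep_parent v : v != r -> (bfs_dep (bfs_parent v)).+1 = bfs_dep v.
Proof.
move=> Hv; have /andP[Hw He] := bfs_parentP Hv.
have H1 := bfs_dep_min Hw.
have H2 : (bfs_dep v <= (bfs_dep (bfs_parent v)).+1)%N.
  by apply: bfs_dep_min => /=; apply/existsP; exists (bfs_parent v); rewrite walk_bfs_dep He.
have H0 : bfs_dep v <> 0%N.
  by move=> E0; have := walk_bfs_dep v; rewrite E0 /= => /eqP E1; rewrite E1 eqxx in Hv.
lia.
Qed.

Lemma bfs_parP v : v != r -> E (bfs_par v) && joins o tau (bfs_par v) (bfs_parent v) v.
Proof.
move=> Hv; have /andP[_ /existsP[i Hi]] := bfs_parentP Hv.
by rewrite /bfs_par; case: pickP => [i' -> // | /(_ i)]; rewrite Hi.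
Qed.

Lemma bfs_par_mem v : v != r -> E (bfs_par v).
Proof. by case/bfs_parP/andP. Qed.

Lemma bfs_parent_edge v : v != r -> joins o tau (bfs_par v) (bfs_parent v) v.
Proof. by case/bfs_parP/andP. Qed.

End BreadthFirstTree.

Lemma exists_root (V : finType) (N : nat) (o tau : 'I_N -> V) (x0 : V) :
  exists r, degree o tau r = 1%N -> forall x, degree o tau x = 1%N.
Proof.
case: (pickP [pred x | degree o tau x != 1%N]) => [r /= Hr | H].
  by exists r => /eqP; rewrite (negbTE Hr).
by exists x0 => _ x; apply/eqP/negbFE; rewrite -[_ != _]/([pred x | _] x) H.
Qed.

Lemma connected_no_isolated (V : finType) (N : nat) (o tau : 'I_N -> V) (i0 : 'I_N) :
  graph_connected o tau -> forall x, exists i, incident o tau i x.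
Proof.
move=> conn x; case/connectP: (conn x (o i0)) => -[|y s] /= Hp Hl.
  by exists i0; rewrite -Hl incident_o.
case/andP: Hp => /existsP[i /orP[] /andP[/eqP Ho /eqP Ht]] _;
  by exists i; rewrite /incident ?Ho ?Ht eqxx ?orbT.
Qed.

Section SpanningTreeChoice.
Variables (V : finType) (N : nat) (o tau : 'I_N -> V) (r : V) (j : 'I_N * trcomp).
Hypothesis no_degree2 : forall x, degree o tau x <> 2%N.
Hypothesis root_choice : degree o tau r = 1%N -> forall x, degree o tau x = 1%N.
Hypothesis no_isolated : forall x, exists i, incident o tau i x.
Hypothesis not_forced : ~ forced_zero o tau j.

Lemma realizes_of_nonbridge :
  (forall x y, connect (adjacent_in o tau (predC1 j.1)) x y) -> realizes_trace_entry o tau j.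
Proof.
move=> Hcut; have reach v := Hcut r v.
have dr := bfs_dep_root reach; have dp := bfs_dep_parent reach.
have pe := bfs_parent_edge j.1 reach.
apply: (realizes_of_tree dr dp pe no_degree2 root_choice no_isolated not_forced) => Ht.
have := bfs_par_mem j.1 reach (child_neq_root dr dp pe Ht).
by rewrite (par_child dr dp pe Ht) inE eqxx.
Qed.

Lemma realizes_of_bridge : graph_connected o tau ->
  ~~ [forall x, forall y, connect (adjacent_in o tau (predC1 j.1)) x y] ->
  realizes_trace_entry o tau j.
Proof.
move=> conn Hbridge.
have reach v : connect (adjacent_in o tau predT) r v.
  by rewrite (@eq_connect _ _ (adjacent o tau)).
have dr := bfs_dep_root reach; have dp := bfs_dep_parent reach.
have pe := bfs_parent_edge j.1 reach.
apply: (realizes_of_tree dr dp pe no_degree2 root_choice no_isolated not_forced) => Ht i Hi.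
apply/eqP/negPn/negP => Hneq; case/negP: Hbridge.
have := crossing_connected dr dp pe (child_neq_root dr dp pe Ht) Hi Hneq.
by rewrite (par_child dr dp pe Ht) => H; apply/forallP => x; apply/forallP => y; apply: H.
Qed.

End SpanningTreeChoice.

Unset Implicit Arguments.

Theorem mainTheorem16 (V : finType) (N : nat) (o tau : 'I_N -> V)
  (j : 'I_N * trcomp) :
  assumptionA o tau ->
  ~ forced_zero o tau j ->
  exists (l : 'I_N -> R) (k : R) (f df : 'I_N -> R -> C),
    (forall i, 0 < l i) /\ 0 < k /\
    eigenpair o tau l (k ^ 2) f df /\
    simple_eigenvalue o tau l (k ^ 2) /\
    ~ supported_on_single_loop o tau l f /\
    trace_k l k f df j <> RtoC 0.
Proof.
case=> conn no_degree2 _ not_forced; change (realizes_trace_entry o tau j).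
have [r root_choice] := exists_root o tau (o j.1).
have no_isolated := connected_no_isolated j.1 conn.
case: (boolP [forall x, forall y, connect (adjacent_in o tau (predC1 j.1)) x y]) => [Hcut|].
  apply: (realizes_of_nonbridge no_degree2 root_choice no_isolated not_forced) => x y.
  by move/forallP/(_ x)/forallP: Hcut.
exact: (realizes_of_bridge no_degree2 root_choice no_isolated not_forced conn).
Qed.
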